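(* Let $T$ be an invertible operator in $\mathcal D(\mathcal P_n)$. Then $Z(Tf)\subset Z(f)+\Omega$ for every $f\in\mathcal P_n\setminus\{0\}$ and every circular domain $\Omega$ such that $Z(T\phi_k)\subset\Omega$ for all $k=1,\dots,n$.
   Context: Let $n\ge 1$ be an integer and $\mathcal P_n$ the complex vector space of polynomials in one complex variable of degree at most $n$; $\phi_k(z)=z^k/k!$. $D$ is differentiation on $\mathcal P_n$, $I$ the identity, and $\mathcal D(\mathcal P_n)$ the linear span of $I,D,\dots,D^n$. For a nonzero $f$, $Z(f)$ is the multiset of roots of $f$ (with multiplicity; empty for nonzero constants). For $A,B\subset\mathbb C$, $A+B=\{u+v:u\in A,v\in B\}$ (empty if $A$ is empty). A circular domain is an open or closed disk, the open or closed exterior of a disk, or an open or closed half-plane in $\mathbb C$. *)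

From HB Require Import structures.
From mathcomp Require Import all_boot all_order all_algebra.
From mathcomp Require Import complex.
From mathcomp Require Import reals.
Set Implicit Arguments. Unset Strict Implicit. Unset Printing Implicit Defensive.
Import Order.TTheory GRing.Theory Num.Theory.
Local Open Scope ring_scope.
Local Open Scope complex_scope.

Section Defs.
Variable R : realType.
Local Notation C := (R[i]).

Definition inPn (n : nat) (f : {poly C}) : Prop := (size f <= n.+1)%N.

Definition phi (k : nat) : {poly C} := (k`!%:R)^-1 *: 'X^k.

Definition Dop (n : nat) (a : 'I_n.+1 -> C) (f : {poly C}) : {poly C} :=
  \sum_(k < n.+1) a k *: f^`(k).

Definition invertible_on_Pn (n : nat) (T : {poly C} -> {poly C}) : Prop :=
  (forall f, inPn n f -> inPn n (T f)) /\
  exists S : {poly C} -> {poly C},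
    (forall g, inPn n g -> inPn n (S g)) /\
    (forall f, inPn n f -> S (T f) = f) /\
    (forall g, inPn n g -> T (S g) = g).

(* the (underlying set of the) zero multiset Z(f) *)
Definition Zset (f : {poly C}) : C -> Prop := fun z => root f z.

Definition msum (A B : C -> Prop) : C -> Prop :=
  fun w => exists u v, A u /\ B v /\ w = u + v.

Definition circular_domain (Om : C -> Prop) : Prop :=
  (exists (c : C) (r : R), 0 < r /\
     ((forall z, Om z <-> `|z - c| < r%:C) \/
      (forall z, Om z <-> `|z - c| <= r%:C) \/
      (forall z, Om z <-> r%:C < `|z - c|) \/
      (forall z, Om z <-> r%:C <= `|z - c|)))
  \/
  (exists (a : C) (b : R), a != 0 /\
     ((forall z, Om z <-> b < complex.Re (a * z)) \/
      (forall z, Om z <-> b <= complex.Re (a * z)))).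
End Defs.

From HB Require Import structures.
From mathcomp Require Import all_boot all_order all_algebra.
From mathcomp Require Import complex.
From mathcomp Require Import reals.
From mathcomp Require Import ring lra.
Set Implicit Arguments. Unset Strict Implicit. Unset Printing Implicit Defensive.
Import Order.TTheory GRing.Theory Num.Theory.
Local Open Scope ring_scope.
Local Open Scope complex_scope.

(* Write Omega as {u | H u < 0} or {u | H u <= 0} for a real circle function
   H u = alpha |u|^2 + beta1 Re u + beta2 Im u + gamma.  If m = deg f, then
   (T f)(z) is the apolar pairing sum_i (T phi_m)_i f^(m-i)(z) i! of T phi_m
   with f at z, and all roots of T phi_m lie in Omega.  Grace's theorem, proved
   by induction on m, then gives a root u of f with z - u in Omega: splitting
   off a root u of f, either z - u is in Omega, or the pairing equals the one of
   f / (X - u) with the polar derivative of T phi_m at z - u, whose roots stay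
   in Omega by Laguerre's theorem.  For Laguerre's theorem, at a root w of the
   polar derivative with pole ze, 1/(w - ze) is the mean of the 1/(w - x) over
   the roots x; the inversion t |-> w - 1/t turns H into a convex circle
   function when w is outside Omega, and Jensen's inequality puts ze in Omega. *)

Section PolarDerivative.
Variable R : comNzRingType.
Implicit Types (q h : {poly R}) (u w z ze : R).

(* The polar derivative of [q], regarded as a polynomial of degree [N]. *)
Definition polar (N : nat) ze q : {poly R} := q *+ N + (ze%:P - 'X) * q^`().

Lemma coef_polar N ze q i :
  (polar N ze q)`_i = q`_i *+ N - q`_i *+ i + ze * q`_i.+1 *+ i.+1.
Proof.
rewrite /polar coefD coefMn mulrBl coefB coefCM coefXM !coef_deriv.
case: i => [|i] /=; first by rewrite subr0 mulr0n subr0 mulrnAr.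
by rewrite mulrnAr addrA addrAC.
Qed.

Lemma horner_polar N ze q w :
  (polar N ze q).[w] = q.[w] *+ N + (ze - w) * q^`().[w].
Proof.
by rewrite /polar hornerD hornerMn hornerM hornerD hornerN hornerC hornerX.
Qed.

Lemma size_polar N ze q : (size q <= N.+1)%N -> (size (polar N ze q) <= N)%N.
Proof.
move=> sq; apply/leq_sizeP => j le_Nj; rewrite coef_polar.
rewrite [q`_j.+1]nth_default ?(leq_trans sq) // mulr0 mul0rn addr0.
move: le_Nj; rewrite leq_eqVlt => /orP[/eqP <-|lt_Nj]; first exact: subrr.
by rewrite nth_default ?(leq_trans sq lt_Nj) // !mul0rn subr0.
Qed.

Lemma coef_polar_prod_XsubC m ze c (s : seq R) : size s = m.+1 ->
  (polar m.+1 ze (c *: \prod_(x <- s) ('X - x%:P)))`_m =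
  c * (ze *+ m.+1 - \sum_(x <- s) x).
Proof.
move=> sm; rewrite coef_polar !coefZ.
have -> : (\prod_(x <- s) ('X - x%:P))`_m.+1 = 1.
  by rewrite -sm -(lead_coef_prod_XsubC s xpredT id) /lead_coef size_prod_XsubC.
have -> : (\prod_(x <- s) ('X - x%:P))`_m = - \sum_(x <- s) x.
  by rewrite -coefPn_prod_XsubC sm.
by rewrite -mulrnBr // subSnn; ring.
Qed.

Lemma derivnS_XsubCM u h j :
  (('X - u%:P) * h)^`(j.+1) = ('X - u%:P) * h^`(j.+1) + h^`(j) *+ j.+1.
Proof.
elim: j => [|j IH].
  by rewrite derivn1 derivM derivXsubC mul1r derivn0 derivn1 addrC.
rewrite derivnS IH derivD derivM derivXsubC mul1r derivMn -!derivnS.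
by rewrite [in RHS]mulrS addrCA addrA.
Qed.

Lemma horner_derivn_XsubCM u h j z :
  ((('X - u%:P) * h)^`(j)).[z] = (z - u) * (h^`(j)).[z] + (h^`(j.-1)).[z] *+ j.
Proof.
case: j => [|j]; first by rewrite !derivn0 hornerM hornerXsubC mulr0n addr0.
by rewrite derivnS_XsubCM hornerD hornerM hornerXsubC hornerMn.
Qed.

Definition apolar (m : nat) q h z : R :=
  \sum_(i < m.+1) q`_i * (h^`(m - i)).[z] *+ i`!.

Lemma apolar_XsubCM m q u h z : (size h <= m.+1)%N ->
  apolar m.+1 q (('X - u%:P) * h) z = apolar m (polar m.+1 (z - u) q) h z.
Proof.
move=> sh; rewrite /apolar.
under eq_bigr => i _ do rewrite horner_derivn_XsubCM mulrDr mulrnDl.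
rewrite big_split /= big_ord_recl /= -derivnS (derivn_poly0 sh) horner0.
rewrite !mulr0 mul0rn add0r [\sum_(i < m.+2) _]big_ord_recr /= subnn.
rewrite mulr0n mulr0 mul0rn addr0.
under [in RHS]eq_bigr => i _ do rewrite coef_polar mulrDl mulrnDl.
rewrite big_split /= addrC; congr (_ + _); apply: eq_bigr => i _.
  have le_im : (i <= m)%N by rewrite -ltnS.
  rewrite subSn //= -mulrnBr ?leqW // subSn //.
  by move: (q`_i) (h^`(m - i).[z]) => x y; ring.
rewrite /bump /= add1n subSS factS.
by move: (q`_i.+1) (h^`(m - i).[z]) => x y; ring.
Qed.

Lemma apolar_sumZ m (I : Type) (r : seq I) (c : I -> R) (qs : I -> {poly R}) h z :
  apolar m (\sum_(k <- r) c k *: qs k) h z =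
  \sum_(k <- r) c k * apolar m (qs k) h z.
Proof.
rewrite /apolar; under eq_bigr => i _ do rewrite coef_sum mulr_suml -sumrMnl.
rewrite exchange_big /=; apply: eq_bigr => k _; rewrite mulr_sumr.
by apply: eq_bigr => i _; rewrite coefZ -mulrA mulrnAr.
Qed.

Lemma apolar_derivn_Xn m k h z : (size h <= m.+1)%N ->
  apolar m ('X^m)^`(k) h z = (h^`(k)).[z] *+ m`!.
Proof.
move=> sh; rewrite /apolar derivnXn.
case: (leqP k m) => [le_km|lt_mk]; last first.
  rewrite (derivn_poly0 (leq_trans sh lt_mk)) horner0 mul0rn big1 // => i _.
  by rewrite ffact_small // mulr0n coef0 mul0r mul0rn.
have lt_mkm : (m - k < m.+1)%N by rewrite ltnS leq_subr.
rewrite (bigD1 (Ordinal lt_mkm)) //= big1 ?addr0 => [|i ne_i].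
  by rewrite coefMn coefXn eqxx subKn // mulr_natl -mulrnA ffact_fact.
rewrite coefMn coefXn; case: eqP => [e|]; last by rewrite mul0rn mul0r mul0rn.
by case/eqP: ne_i; apply: val_inj.
Qed.
End PolarDerivative.

Section PolarRoots.
Variable F : fieldType.
Implicit Types (q : {poly F}) (w ze : F).

Lemma polar_neq0 N ze q : N%:R != 0 :> F -> ~~ root q ze -> polar N ze q != 0.
Proof.
move=> N_neq0; apply: contraNneq => p0; apply/rootP.
have := horner_polar N ze q ze; rewrite p0 horner0 subrr mul0r addr0 -mulr_natr.
by move/esym/eqP; rewrite mulf_eq0 (negbTE N_neq0) orbF => /eqP.
Qed.

Lemma horner_deriv_prod_XsubC (s : seq F) w : w \notin s ->
  (\prod_(x <- s) ('X - x%:P))^`().[w] =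
  (\prod_(x <- s) ('X - x%:P)).[w] * \sum_(x <- s) (w - x)^-1.
Proof.
elim: s => [|x s IH]; first by rewrite !big_nil mulr0 -polyC1 derivC horner0.
rewrite in_cons negb_or => /andP[ne_wx ws].
rewrite !big_cons derivM derivXsubC mul1r hornerD !hornerM hornerXsubC IH //.
have : w - x != 0 by rewrite subr_eq0.
by move: (_.[w]) (\sum_(_ <- s) _) => P S wx_neq0; field.
Qed.

Lemma root_polar_prod_XsubC N ze c (s : seq F) w :
  ~~ root (c *: \prod_(x <- s) ('X - x%:P)) w ->
  root (polar N ze (c *: \prod_(x <- s) ('X - x%:P))) w ->
  (w - ze) * \sum_(x <- s) (w - x)^-1 = N%:R.
Proof.
rewrite [root _ w]/root hornerZ => cPw_neq0.
have ws : w \notin s.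
  by rewrite -root_prod_XsubC; apply: contra cPw_neq0 => /eqP->; rewrite mulr0.
rewrite /root horner_polar derivZ !hornerZ horner_deriv_prod_XsubC //.
move: cPw_neq0; move: (_.[w]) (\sum_(_ <- s) _) => P S nz.
rewrite -mulr_natr => /eqP eq0.
have : c * P * (N%:R - (w - ze) * S) = 0 by rewrite -eq0; ring.
by move/eqP; rewrite mulf_eq0 (negbTE nz) subr_eq0 => /eqP <-.
Qed.
End PolarRoots.

Lemma sqr_sum_le (R : realFieldType) (s : seq R) :
  (\sum_(x <- s) x) ^+ 2 <= (size s)%:R * \sum_(x <- s) x ^+ 2.
Proof.
elim: s => [|y s IH]; first by rewrite !big_nil expr0n mul0r.
have dev_ge0 : 0 <= \sum_(x <- s) (x - y) ^+ 2.
  by apply: sumr_ge0 => *; apply: sqr_ge0.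
have dev_eq : \sum_(x <- s) (x - y) ^+ 2 = \sum_(x <- s) x ^+ 2
    - 2 * y * \sum_(x <- s) x + (size s)%:R * y ^+ 2.
  elim: (s) => [|z zs IHz]; first by rewrite !big_nil /=; ring.
  by rewrite !big_cons IHz /= -[(size zs).+1]addn1 natrD; ring.
rewrite dev_eq in dev_ge0.
rewrite !big_cons /= -[(size s).+1]addn1 natrD; nra.
Qed.

Lemma sumr_lteif0 (R : numDomainType) (T : eqType) C (s : seq T) (F : T -> R) :
  s != [::] -> (forall x, x \in s -> F x < 0 ?<= if C) ->
  \sum_(x <- s) F x < 0 ?<= if C.
Proof.
elim: s => [|x s IH] // _ Fs; rewrite big_cons.
have Fx := Fs x (mem_head x s).
have [->|s_neq0] := eqVneq s [::]; first by rewrite big_nil addr0.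
have Fs' y : y \in s -> F y < 0 ?<= if C.
  by move=> ys; apply: Fs; rewrite in_cons ys orbT.
have := IH s_neq0 Fs'; clear IH Fs Fs'; case: C Fx => /= Fx Fsum.
  by have := lerD Fx Fsum; rewrite addr0.
by have := ltrD Fx Fsum; rewrite addr0.
Qed.

Section CircleForms.
Variable R : rcfType.
Local Notation C := R[i].
Local Notation Re := (@complex.Re R).
Local Notation Im := (@complex.Im R).
Implicit Types (u v w x m : C) (s : seq C).

Definition sqnorm x : R := Re x ^+ 2 + Im x ^+ 2.

Lemma sqnorm_ge0 x : 0 <= sqnorm x.
Proof. by rewrite addr_ge0 ?sqr_ge0. Qed.

Lemma sqnorm_gt0 x : x != 0 -> 0 < sqnorm x.
Proof.
case: x => p q nz; rewrite lt_def sqnorm_ge0 andbT /sqnorm paddr_eq0 ?sqr_ge0 //=.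
by rewrite !sqrf_eq0; apply: contra nz => /andP[/eqP-> /eqP->].
Qed.

Lemma sqnorm_mean s N m : (size s <= N)%N -> m *+ N = \sum_(x <- s) x ->
  sqnorm m *+ N <= \sum_(x <- s) sqnorm x.
Proof.
case: N => [|N] sN mE.
  by rewrite mulr0n sumr_ge0 // => x _; apply: sqnorm_ge0.
have ReE : Re m *+ N.+1 = \sum_(x <- s) Re x by rewrite -raddfMn mE raddf_sum.
have ImE : Im m *+ N.+1 = \sum_(x <- s) Im x by rewrite -raddfMn mE raddf_sum.
have csRe := sqr_sum_le (map Re s); have csIm := sqr_sum_le (map Im s).
rewrite !big_map !size_map in csRe csIm.
have sN' : (size s)%:R <= N.+1%:R :> R by rewrite ler_nat.
have sRe_ge0 : 0 <= \sum_(x <- s) Re x ^+ 2 by apply: sumr_ge0 => *; apply: sqr_ge0.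
have sIm_ge0 : 0 <= \sum_(x <- s) Im x ^+ 2 by apply: sumr_ge0 => *; apply: sqr_ge0.
rewrite -(ler_pM2r (ltr0Sn R N)).
have -> : sqnorm m *+ N.+1 * N.+1%:R = (Re m *+ N.+1) ^+ 2 + (Im m *+ N.+1) ^+ 2.
  by rewrite /sqnorm; ring.
rewrite ReE ImE /sqnorm big_split /=; apply: le_trans (lerD csRe csIm) _.
by rewrite -mulrDr mulrC ler_wpM2l ?addr_ge0.
Qed.

Record cform := CForm { cf_quad : R; cf_re : R; cf_im : R; cf_const : R }.

Definition cfun H u : R :=
  cf_quad H * sqnorm u + cf_re H * Re u + cf_im H * Im u + cf_const H.
Coercion cfun : cform >-> Funclass.
Implicit Types H : cform.

Definition cform_opp H :=
  CForm (- cf_quad H) (- cf_re H) (- cf_im H) (- cf_const H).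

Lemma cfun_opp H u : cform_opp H u = - H u.
Proof. by rewrite /cfun /=; ring. Qed.

(* [cform_inv H w] is the circle function [t |-> sqnorm t * H (w - t^-1)]. *)
Definition cform_inv H w :=
  CForm (H w) (- (2 * cf_quad H * Re w) - cf_re H)
        (2 * cf_quad H * Im w + cf_im H) (cf_quad H).

Lemma cfun_inv H w v : v != 0 -> H (w - v) * sqnorm v^-1 = cform_inv H w v^-1.
Proof.
move=> v_neq0; have := sqnorm_gt0 v_neq0; rewrite lt0r => /andP[nv_neq0 _].
move: v_neq0 nv_neq0; case: v => p q; case: w => a b /= _ nv_neq0.
rewrite /cfun /= /cfun /sqnorm /= in nv_neq0 *; by field.
Qed.

Lemma cfun_sum H s :
  \sum_(x <- s) H x =
  cf_quad H * \sum_(x <- s) sqnorm x + cf_re H * Re (\sum_(x <- s) x)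
  + cf_im H * Im (\sum_(x <- s) x) + cf_const H *+ size s.
Proof.
elim: s => [|x s IH]; first by rewrite !big_nil !raddf0 !mulr0 !addr0.
by rewrite !big_cons IH !raddfD /= mulrS /cfun; ring.
Qed.

Lemma cfun_mean H s N m : 0 <= cf_quad H -> (size s <= N)%N ->
  m *+ N = \sum_(x <- s) x ->
  H m *+ N <= \sum_(x <- s) H x + cf_const H *+ (N - size s).
Proof.
move=> quad_ge0 sN mE; rewrite cfun_sum -mE !raddfMn /= -addrA -mulrnDr subnKC //.
have := ler_wpM2l quad_ge0 (sqnorm_mean sN mE); rewrite /cfun.
by move: (sqnorm m) => q; lra.
Qed.
End CircleForms.

Section CircularRegions.
Variable R : rcfType.
Local Notation C := R[i].
Implicit Types (H : cform R) (u v w x z ze : C) (s : seq C) (q h : {poly C}).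

Definition cregion (closed : bool) H u : bool := H u < 0 ?<= if closed.

Lemma cregionN_ge0 closed H u : ~~ cregion closed H u -> 0 <= H u.
Proof. by rewrite /cregion -lteifNE => /lteifW. Qed.

Lemma cregion_inv closed H w v : v != 0 ->
  cregion closed (cform_inv H w) v^-1 = cregion closed H (w - v).
Proof.
move=> v_neq0; have nv_gt0 := sqnorm_gt0 (invr_neq0 v_neq0).
by rewrite /cregion -cfun_inv // -[in RHS](lteif_pM2r _ nv_gt0) mul0r.
Qed.

Lemma cregion_mean closed H s N (m : C) :
  0 <= cf_quad H -> s != [::] -> (size s <= N)%N ->
  cf_const H *+ (N - size s) <= 0 ->
  m *+ N = \sum_(x <- s) x -> (forall x, x \in s -> cregion closed H x) ->
  cregion closed H m.
Proof.
move=> quad_ge0 s_neq0 sN const_le0 mE sK.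
have N_gt0 : (0 < N%:R :> R) by rewrite ltr0n (leq_trans _ sN) // lt0n size_eq0.
rewrite /cregion -(lteif_pM2r _ N_gt0) mul0r mulr_natr.
apply: (lteif_trans (C1 := true) (cfun_mean quad_ge0 sN mE)).
by apply: (lteif_trans (C1 := true) _ (sumr_lteif0 s_neq0 sK)); rewrite /= gerDl.
Qed.

Section Laguerre.
Variables (closed : bool) (H : cform R).
Local Notation K := (cregion closed H).

(* [deficit m q <= 0] lets [q] have degree below [m] (roots at infinity) only
   when [cf_quad H <= 0], i.e. for half-planes and exteriors of disks. *)
Definition deficit m q : R := cf_quad H *+ (m.+1 - size q).

Lemma root_polar_cregion m ze q w : q != 0 -> (size q <= m.+2)%N ->
  deficit m.+1 q <= 0 -> (forall x, root q x -> K x) -> ~~ K ze ->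
  root (polar m.+1 ze q) w -> K w.
Proof.
move=> q_neq0 sq deficit_le0 qK zeK polar_w; apply: contraNT zeK => wK.
have [s qE] := closed_field_poly_normal q.
have rootqE x : root q x = (x \in s).
  by rewrite qE rootZ ?lead_coef_eq0 // root_prod_XsubC.
have ss : (size s).+1 = size q.
  by rewrite qE size_scale ?lead_coef_eq0 ?size_prod_XsubC.
have qw : ~~ root q w by apply: contra wK; exact: qK.
have ws x : x \in s -> w - x != 0.
  by rewrite subr_eq0 => xs; apply: contraNneq qw => ->; rewrite rootqE.
move: (qw) polar_w; rewrite qE => qw' polar_w.
have laguerre := root_polar_prod_XsubC qw' polar_w.
have m_neq0 : m.+1%:R != 0 :> C by rewrite pnatr_eq0.
have wze : w - ze != 0 by apply: contra_neq m_neq0 => e; rewrite -laguerre e mul0r.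
have s_neq0 : s != [::].
  by apply: contra_neq m_neq0 => s0; rewrite -laguerre s0 big_nil mulr0.
(* [(w - ze)^-1] is the mean of the [(w - x)^-1], and inversion at [w] maps
   the region of [H] to that of the convex form [cform_inv H w]. *)
rewrite -[ze](subKr w) -(cregion_inv _ _ _ wze).
apply: (@cregion_mean _ _ [seq (w - x)^-1 | x <- s] m.+1).
- exact: cregionN_ge0 wK.
- by rewrite -size_eq0 size_map size_eq0.
- by rewrite size_map -ltnS ss.
- by rewrite /= size_map -subSS ss.
- by rewrite big_map -mulr_natr -laguerre mulrA mulVf ?mul1r.
move=> _ /mapP[x xs ->]; rewrite cregion_inv ?ws // subKr.
by apply: qK; rewrite rootqE.
Qed.

Lemma deficit_polar m ze q : q != 0 -> (size q <= m.+2)%N ->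
  deficit m.+1 q <= 0 -> (forall x, root q x -> K x) -> ~~ K ze ->
  deficit m (polar m.+1 ze q) <= 0.
Proof.
rewrite /deficit => q_neq0 sq deficit_le0 qK zeK.
have [quad_le0|quad_gt0] := leP (cf_quad H) 0; first exact: mulrn_wle0.
have sqm : size q = m.+2.
  apply/eqP; rewrite eqn_leq sq -subn_eq0; apply: contraTT deficit_le0 => k_neq0.
  by rewrite -ltNge pmulrn_lgt0 // lt0n.
suff /eqP-> : (m.+1 - size (polar m.+1 ze q) == 0)%N by rewrite mulr0n.
rewrite subn_eq0 ltnNge; apply/negP => /(nth_default 0).
have [s qE] := closed_field_poly_normal q.
have sm : size s = m.+1.
  by apply: succn_inj; rewrite -sqm qE size_scale ?lead_coef_eq0 ?size_prod_XsubC.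
rewrite qE coef_polar_prod_XsubC // => /eqP; rewrite mulf_eq0 lead_coef_eq0.
rewrite (negbTE q_neq0) subr_eq0 => /eqP zeE; apply: (negP zeK).
apply: (@cregion_mean _ _ s m.+1) => //; first exact: ltW.
- by rewrite -size_eq0 sm.
- by rewrite sm.
- by rewrite sm subnn mulr0n.
by move=> x xs; apply: qK; rewrite qE rootZ ?lead_coef_eq0 // root_prod_XsubC.
Qed.

Lemma apolar_eq0_cregion m q h z : q != 0 -> (size q <= m.+1)%N ->
  deficit m q <= 0 -> (forall x, root q x -> K x) ->
  size h = m.+1 -> apolar m q h z = 0 -> exists2 u, root h u & K (z - u).
Proof.
elim: m q h => [|m IH] q h q_neq0 sq deficit_le0 qK sh.
  rewrite /apolar big_ord1 subn0 derivn0 mulr1n (size1_polyC (eq_leq sh)) hornerC.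
  move/eqP; rewrite mulf_eq0 => /orP[]/eqP coef0_eq0.
    by move: q_neq0; rewrite (size1_polyC sq) coef0_eq0 eqxx.
  by move: (sh); rewrite (size1_polyC (eq_leq sh)) coef0_eq0 size_poly0.
have /closed_rootP[u hu] : size h != 1 by rewrite sh.
have [Ku|nKu] := boolP (K (z - u)); first by exists u.
case/factor_theorem: hu => h' hE.
have h'_neq0 : h' != 0.
  by apply/eqP => h'0; move: sh; rewrite hE h'0 mul0r size_poly0.
have sh' : size h' = m.+1.
  by move: sh; rewrite hE size_Mmonic ?monicXsubC // size_XsubC addn2 => -[].
rewrite hE mulrC apolar_XsubCM ?sh' // => apolar_eq0.
have m_neq0 : m.+1%:R != 0 :> C by rewrite pnatr_eq0.
have qzu : ~~ root q (z - u) by apply: contra nKu; exact: qK.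
have [v h'v Kv] := IH (polar m.+1 (z - u) q) h' (polar_neq0 m_neq0 qzu)
  (size_polar _ sq) (deficit_polar q_neq0 sq deficit_le0 qK nKu)
  (fun x => root_polar_cregion (w := x) q_neq0 sq deficit_le0 qK nKu)
  sh' apolar_eq0.
by exists v => //; rewrite rootM h'v orbT.
Qed.
End Laguerre.
End CircularRegions.

Section CircularDomains.
Variable R : rcfType.
Local Notation C := R[i].
Local Notation Re := (@complex.Re R).
Local Notation Im := (@complex.Im R).

Lemma lteif_normc_r cl (x : C) (r : R) : 0 <= r ->
  (`|x| < r%:C ?<= if cl) = (sqnorm x < r ^+ 2 ?<= if cl).
Proof.
move=> r_ge0; have s_ge0 := sqrtr_ge0 (sqnorm x).
rewrite normc_def -[in RHS](sqr_sqrtr (sqnorm_ge0 x)).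
by case: cl => /=;
  rewrite ?lecR ?ltcR ?(ler_pXn2r _ s_ge0 r_ge0) ?(ltr_pXn2r _ s_ge0 r_ge0).
Qed.

Lemma lteif_normc_l cl (x : C) (r : R) : 0 <= r ->
  (r%:C < `|x| ?<= if cl) = (r ^+ 2 < sqnorm x ?<= if cl).
Proof.
move=> r_ge0; have s_ge0 := sqrtr_ge0 (sqnorm x).
rewrite normc_def -[in RHS](sqr_sqrtr (sqnorm_ge0 x)).
by case: cl => /=;
  rewrite ?lecR ?ltcR ?(ler_pXn2r _ r_ge0 s_ge0) ?(ltr_pXn2r _ r_ge0 s_ge0).
Qed.

Definition disk_cform (c : C) (r : R) :=
  CForm 1 (- (2 * Re c)) (- (2 * Im c)) (sqnorm c - r ^+ 2).

Lemma disk_cformE c r z : disk_cform c r z = sqnorm (z - c) - r ^+ 2.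
Proof. by rewrite /cfun /= /sqnorm !raddfB /=; ring. Qed.

Definition halfplane_cform (a : C) (b : R) := CForm 0 (- Re a) (Im a) b.

Lemma halfplane_cformE a b z : halfplane_cform a b z = b - Re (a * z).
Proof. by case: a => a1 a2; case: z => z1 z2; rewrite /cfun /=; ring. Qed.
End CircularDomains.

Lemma circular_domain_cregion (R : realType) (Om : R[i] -> Prop) :
  circular_domain Om ->
  exists closed (H : cform R), forall z, Om z <-> cregion closed H z.
Proof.
case=> [[c [r [r_gt0 Om_disk]]] | [a [b [_ Om_half]]]].
  have disk cl z : (`|z - c| < r%:C ?<= if cl) = cregion cl (disk_cform c r) z.
    by rewrite /cregion disk_cformE subr_lteifr0 lteif_normc_r ?ltW.
  have ext cl z :
      (r%:C < `|z - c| ?<= if cl) = cregion cl (cform_opp (disk_cform c r)) z.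
    rewrite /cregion cfun_opp disk_cformE lteifNr0 subr_lteif0r.
    by rewrite lteif_normc_l ?ltW.
  case: Om_disk => [E|[E|[E|E]]];
    [exists false, (disk_cform c r) | exists true, (disk_cform c r)
    | exists false, (cform_opp (disk_cform c r))
    | exists true, (cform_opp (disk_cform c r))] => z; by rewrite -?disk -?ext.
have half cl z :
    (b < complex.Re (a * z) ?<= if cl) = cregion cl (halfplane_cform a b) z.
  by rewrite /cregion halfplane_cformE subr_lteifr0.
by case: Om_half => E; [exists false | exists true];
  exists (halfplane_cform a b) => z; rewrite -half.
Qed.

Section DifferentialOperators.
Variables (R : realType) (n : nat) (a : 'I_n.+1 -> R[i]).
Local Notation C := R[i].
Implicit Types (m : nat) (q f : {poly C}).

Lemma Dop_polyC (c : C) : Dop a c%:P = (a ord0 * c)%:P.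
Proof.
rewrite /Dop big_ord_recl derivn0 big1 ?addr0 ?scale_polyC // => k _.
by rewrite derivnC scaler0.
Qed.

Lemma Dop_invertible_coef0 :
  invertible_on_Pn n (Dop a) -> a ord0 != 0.
Proof.
move=> [_ [S [_ [STK _]]]]; apply: contra_neq (@oner_neq0 {poly C}) => a0_eq0.
have inPnC (c : C) : inPn n c%:P by rewrite /inPn size_polyC (leq_trans (leq_b1 _)).
rewrite -polyC1 -(STK _ (inPnC 1)); have := STK _ (inPnC 0).
by rewrite !Dop_polyC a0_eq0 !mul0r => ->.
Qed.

Lemma size_Dop q : a ord0 != 0 -> size (Dop a q) = size q.
Proof.
move=> a0_neq0; have [->|q_neq0] := eqVneq q 0.
  by rewrite -[0]/(0%:P : {poly C}) Dop_polyC mulr0.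
rewrite /Dop big_ord_recl derivn0 size_addl size_scale //.
apply: (@leq_ltn_trans (size q).-1); last by rewrite prednK ?size_poly_gt0.
apply/leq_sizeP => j le_j; rewrite coef_sum big1 // => k _.
rewrite coefZ coef_derivn nth_default ?mul0rn ?mulr0 //.
by rewrite lift0 addSn (leq_trans (leqSpred _)) // ltnS (leq_trans le_j) ?leq_addl.
Qed.

Lemma size_Dop_phi m :
  a ord0 != 0 -> size (Dop a (phi R m)) = m.+1.
Proof.
move=> a0_neq0; rewrite size_Dop // size_scale ?size_polyXn //.
by rewrite invr_eq0 pnatr_eq0 -lt0n fact_gt0.
Qed.

Lemma apolar_Dop_phi m f (z : C) : (size f <= m.+1)%N ->
  apolar m (Dop a (phi R m)) f z = (Dop a f).[z].
Proof.
move=> sf; rewrite /Dop /phi horner_sum.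
under eq_bigr => k _ do rewrite derivnZ scalerA.
rewrite apolar_sumZ; apply: eq_bigr => k _.
have fact_neq0 : m`!%:R != 0 :> C by rewrite pnatr_eq0 -lt0n fact_gt0.
by rewrite apolar_derivn_Xn // hornerZ -mulr_natr; field.
Qed.
End DifferentialOperators.

Theorem mainTheorem7 (R : realType) (n : nat) (a : 'I_n.+1 -> R[i]) :
  (1 <= n)%N ->
  invertible_on_Pn n (Dop a) ->
  forall (f : {poly R[i]}), inPn n f -> f != 0 ->
  forall (Om : R[i] -> Prop), circular_domain Om ->
  (forall k : nat, (1 <= k <= n)%N ->
     forall z, Zset (Dop a (phi R k)) z -> Om z) ->
  forall z, Zset (Dop a f) z -> msum (Zset f) Om z.
Proof.
move=> _ T_inv f f_Pn f_neq0 Om Om_circ Om_roots z Tf_z.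
have [closed [H OmE]] := circular_domain_cregion Om_circ.
have a0_neq0 := Dop_invertible_coef0 T_inv.
have sf : size f = (size f).-1.+1 by rewrite prednK ?size_poly_gt0.
move: sf f_Pn; set m := (size f).-1 => sf; rewrite /inPn sf ltnS => le_mn.
have sTphi := size_Dop_phi m a0_neq0.
have Tphi_neq0 : Dop a (phi R m) != 0 by rewrite -size_poly_gt0 sTphi.
have Tphi_roots w : root (Dop a (phi R m)) w -> cregion closed H w.
  case: (posnP m) => [m0 | m_gt0] Tphi_w.
    by have := root_size_gt1 Tphi_neq0 Tphi_w; rewrite sTphi m0.
  by apply/OmE/(Om_roots m); rewrite ?m_gt0.
have deficit_le0 : deficit H m (Dop a (phi R m)) <= 0.
  by rewrite /deficit sTphi subnn mulr0n.
have Tphif_z : apolar m (Dop a (phi R m)) f z = 0.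
  by rewrite apolar_Dop_phi ?sf //; apply/eqP.
have [u fu Ku] :=
  apolar_eq0_cregion Tphi_neq0 (eq_leq sTphi) deficit_le0 Tphi_roots sf Tphif_z.
by exists u, (z - u); split => //; split; [apply/OmE | rewrite addrC subrK].
Qed.
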